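(* Let $H\in M_d(\mathbb{C})$ be Hermitian with non-degenerate spectrum and orthonormal eigenbasis $\{|j\rangle\}_{j=1}^d$, and let $\mathbb{G}_0[X]=\sum_{j=1}^d\langle j|X|j\rangle\,|j\rangle\langle j|$. Let $\mathbb{D}[\rho]=\sum_\alpha\big(h_\alpha\rho h_\alpha^\dagger-\tfrac12\{h_\alpha^\dagger h_\alpha,\rho\}\big)$ with $h_\alpha\in M_d(\mathbb{C})$, and set $\widehat{\mathbb{D}}=\mathbb{G}_0\circ\mathbb{D}\circ\mathbb{G}_0$. Then $\widehat{\mathbb{D}}$ generates a semigroup $e^{t\widehat{\mathbb{D}}}$, $t\ge0$, of positive, trace-preserving maps on the set of density matrices commuting with $H$ (i.e. density matrices of the form $\sum_j\rho_{jj}|j\rangle\langle j|$): for every such density matrix $\rho$ and every $t\ge0$, $e^{t\widehat{\mathbb{D}}}[\rho]$ is again a density matrix commuting with $H$.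
   Context: $\mathbb{G}_0$ is the time average of the unitary evolution $\rho\mapsto e^{-itH}\rho e^{itH}$, i.e. the projection onto the diagonal part in the eigenbasis of $H$; the density matrices commuting with $H$ are exactly the states invariant under that unitary evolution. *)

From mathcomp Require Import all_boot all_order all_algebra.
From mathcomp Require Export complex reals.
Set Implicit Arguments. Unset Strict Implicit. Unset Printing Implicit Defensive.
Import Order.TTheory GRing.Theory Num.Theory.
Local Open Scope ring_scope.
Local Open Scope complex_scope.

Section QDefs.
Variable R : realType.
Local Notation C := R[i].

Definition adjmx (m n : nat) (A : 'M[C]_(m, n)) : 'M[C]_(n, m) :=
  map_mx Num.conj A^T.

Definition is_hermitian (d : nat) (A : 'M[C]_d) : Prop := adjmx A = A.

Definition is_unitary_mx (d : nat) (U : 'M[C]_d) : Prop := adjmx U *m U = 1%:M.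

(* |j><j| where |j> is the j-th column of U *)
Definition projU (d : nat) (U : 'M[C]_d) (j : 'I_d) : 'M[C]_d :=
  col j U *m adjmx (col j U).

Definition G0 (d : nat) (U : 'M[C]_d) (X : 'M[C]_d) : 'M[C]_d :=
  \sum_(j < d) (adjmx (col j U) *m X *m col j U) 0 0 *: projU U j.

Definition dissipator (d m : nat) (h : 'I_m -> 'M[C]_d) (rho : 'M[C]_d)
  : 'M[C]_d :=
  \sum_(a < m) (h a *m rho *m adjmx (h a)
     - 2^-1 *: (adjmx (h a) *m h a *m rho + rho *m (adjmx (h a) *m h a))).

Definition Dhat (d m : nat) (U : 'M[C]_d) (h : 'I_m -> 'M[C]_d) :
  'M[C]_d -> 'M[C]_d :=
  fun X => G0 U (dissipator h (G0 U X)).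

(* positive semidefinite: <v|A|v> >= 0 for all v (0 <= z in C means z real, nonneg) *)
Definition is_psd_mx (d : nat) (A : 'M[C]_d) : Prop :=
  forall v : 'cV[C]_d, 0 <= (adjmx v *m A *m v) 0 0.

Definition density (d : nat) (rho : 'M[C]_d) : Prop :=
  is_hermitian rho /\ is_psd_mx rho /\ \tr rho = 1.

Definition exp_partial (d : nat) (L : 'M[C]_d -> 'M[C]_d) (t : R)
  (rho : 'M[C]_d) (n : nat) : 'M[C]_d :=
  \sum_(k < n) ((t ^+ k / (k`!)%:R)%:C *: iter k L rho).

Definition mx_cvg_to (d : nat) (S : nat -> 'M[C]_d) (M : 'M[C]_d) : Prop :=
  forall e : R, 0 < e -> exists N : nat, forall n : nat, (N <= n)%N ->
    forall i j, `|S n i j - M i j| < e%:C.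

Definition is_exp_apply (d : nat) (L : 'M[C]_d -> 'M[C]_d) (t : R)
  (rho M : 'M[C]_d) : Prop :=
  mx_cvg_to (exp_partial L t rho) M.

End QDefs.

(* In the eigenbasis of [H], [G0] keeps only the diagonal, so [Dhat] maps a diagonal
   state [diag p] to [diag (Q p)], where [Q = W - diag (column sums of W)] and
   [W k j = sum_a |<k|h_a|j>|^2 >= 0].  Hence [e^{t Dhat}] acts on diagonal states as the
   classical Markov semigroup [e^{tQ}], which is stochastic: for the total rate [lam],
   [Q + lam] is entrywise nonnegative with column sums [lam], and the Cauchy product of
   the exponential series gives [e^{tQ} = e^{-lam t} e^{t (Q + lam)}]. *)

From mathcomp Require Import all_boot all_order all_algebra.
From mathcomp Require Import complex reals.
From mathcomp Require Import boolp classical_sets functions topology normedtype.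
From mathcomp Require Import sequences exp ring.
Set Implicit Arguments. Unset Strict Implicit. Unset Printing Implicit Defensive.
Import Order.TTheory GRing.Theory Num.Theory numFieldNormedType.Exports.
Local Open Scope ring_scope.
Local Open Scope classical_set_scope.

Section CauchyProduct.
Variable R : realType.
Implicit Types (F : nat -> nat -> R) (a b g : nat -> R).

Lemma sum_antidiagonal F n :
  \sum_(0 <= k < n) \sum_(0 <= i < k.+1) F i (k - i)%N =
  \sum_(0 <= i < n) \sum_(0 <= l < n - i) F i l.
Proof.
elim: n => [|n IH]; first by rewrite !big_geq.
rewrite big_nat_recr //= IH [in RHS]big_nat_recr //= subSnn big_nat1.
rewrite [X in _ + X = _]big_nat_recr //= subnn addrA; congr (_ + _).
rewrite -big_split /=; apply: eq_big_nat => i /andP[_ Hi].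
by rewrite subSn ?(ltnW Hi) // big_nat_recr.
Qed.

Lemma cauchy_defectE F n :
  \sum_(0 <= i < n) \sum_(0 <= l < n) F i l
    - \sum_(0 <= k < n) \sum_(0 <= i < k.+1) F i (k - i)%N
  = \sum_(0 <= i < n) \sum_(n - i <= l < n) F i l.
Proof.
rewrite sum_antidiagonal -sumrB; apply: eq_bigr => i _.
by rewrite (@big_cat_nat _ _ _ (n - i)) ?leq_subr //= addrAC subrr add0r.
Qed.

(* The defect of the Cauchy product at stage [n] only involves pairs [(i, l)]
   with [n <= i + l], none of which lies in the square [[0, m)^2] when [2m <= n]. *)
Lemma cauchy_defect_le F g n m :
  (forall i, 0 <= g i) -> (forall i l, `|F i l| <= g i * g l) -> (m + m <= n)%N ->
  `| \sum_(0 <= i < n) \sum_(0 <= l < n) F i l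
     - \sum_(0 <= k < n) \sum_(0 <= i < k.+1) F i (k - i)%N |
  <= series g n ^+ 2 - series g m ^+ 2.
Proof.
move=> g0 Fg hmn; rewrite cauchy_defectE.
have gg0 i l : 0 <= g i * g l by rewrite mulr_ge0.
have sqr_series k : series g k ^+ 2 = \sum_(0 <= i < k) \sum_(0 <= l < k) g i * g l.
  by rewrite expr2 /series /= big_distrl; apply: eq_bigr => i _; rewrite big_distrr.
have split_sqr : series g n ^+ 2 =
    \sum_(0 <= i < n) \sum_(0 <= l < n - i) g i * g l
  + \sum_(0 <= i < n) \sum_(n - i <= l < n) g i * g l.
  rewrite sqr_series -big_split /=; apply: eq_bigr => i _.
  by rewrite -big_cat_nat ?leq_subr.
have defect_le : `|\sum_(0 <= i < n) \sum_(n - i <= l < n) F i l|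
    <= \sum_(0 <= i < n) \sum_(n - i <= l < n) g i * g l.
  apply: (le_trans (ler_norm_sum _ _ _)); apply: ler_sum => i _.
  by apply: (le_trans (ler_norm_sum _ _ _)); apply: ler_sum => l _.
have square_le : series g m ^+ 2 <= \sum_(0 <= i < n) \sum_(0 <= l < n - i) g i * g l.
  have hmn' : (m <= n)%N by apply: leq_trans hmn; exact: leq_addl.
  pose rows k := \sum_(0 <= i < k) \sum_(0 <= l < n - i) g i * g l.
  have rows_nd : nondecreasing_seq rows.
    by apply: nondecreasing_series => i _ _; apply: sumr_ge0.
  rewrite sqr_series; apply: le_trans (rows_nd _ _ hmn').
  rewrite /rows !big_nat; apply: ler_sum => i /andP[_ him].
  apply: nondecreasing_series => [l _ _ //|].
  rewrite leq_subRL ?(leq_trans (ltnW him)) //.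
  by apply: leq_trans hmn; rewrite leq_add2r ltnW.
rewrite split_sqr addrAC; apply: le_trans defect_le _.
by rewrite lerDr subr_ge0.
Qed.

Lemma cvg_cauchy_product a b g (la lb : R) :
  (forall n, `|a n| <= g n) -> (forall n, `|b n| <= g n) -> cvgn (series g) ->
  series a @ \oo --> la -> series b @ \oo --> lb ->
  series (fun k => \sum_(0 <= i < k.+1) a i * b (k - i)%N) @ \oo --> la * lb.
Proof.
move=> ag bg cvg_g cvg_a cvg_b.
have g0 n : 0 <= g n by apply: le_trans (ag n).
set G := series g; set P := series (fun k => _).
have G_nd : nondecreasing_seq G by apply: nondecreasing_series.
have G_le n : G n <= limn G by exact: nondecreasing_cvgn_le.
pose defect n := series a n * series b n - P n.
have defect0 : defect @ \oo --> 0.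
  apply/cvgrPdist_lt => e e0.
  have /cvgrPdist_lt/(_ e e0) [M _ HM] : (G \* G) @ \oo --> limn G * limn G.
    exact: cvgM.
  exists (M + M)%N => // n /= hn; rewrite sub0r normrN /defect.
  have -> : series a n * series b n = \sum_(0 <= i < n) \sum_(0 <= l < n) a i * b l.
    by rewrite /series /= big_distrl; apply: eq_bigr => i _; rewrite big_distrr.
  apply: le_lt_trans (cauchy_defect_le g0 _ hn) _.
    by move=> i l; rewrite normrM ler_pM.
  apply: le_lt_trans (HM M (leqnn M)); rewrite -!expr2 (le_trans _ (ler_norm _)) //.
  by rewrite lerB // !expr2 ler_pM ?(le_trans (G_le M)) //; apply: sumr_ge0.
have -> : P = series a \* series b - defect by apply/funext => n /=; rewrite subKr.
by rewrite -[la * lb]subr0; apply: cvgB => //; exact: cvgM.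
Qed.
End CauchyProduct.

Lemma sum_kronecker_mul (R : pzSemiRingType) d (F : 'I_d -> R) j :
  \sum_k (k == j)%:R * F k = F j.
Proof.
rewrite (bigD1 j) //= eqxx mul1r big1 ?addr0 // => k /negbTE ->.
by rewrite mul0r.
Qed.

Lemma sum_mulmx_col (R : pzSemiRingType) d (A : 'M[R]_d) (x : 'cV[R]_d) :
  \sum_k (A *m x) k 0 = \sum_j (\sum_k A k j) * x j 0.
Proof.
under eq_bigr do rewrite mxE.
by rewrite exchange_big /=; apply: eq_bigr => j _; rewrite big_distrl.
Qed.

Lemma scalar_mxX (R : pzRingType) d (a : R) l : (a%:M : 'M[R]_d) ^+ l = (a ^+ l)%:M.
Proof. by elim: l => [|l IH]; rewrite ?expr0 // !exprS IH scalar_mxM. Qed.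

(* [W k j] is the rate of the jump [j -> k]. *)
Section RateMatrix.
Variables (R : realType) (d : nat) (W : 'M[R]_d).
Hypothesis W_ge0 : forall k j, 0 <= W k j.

Definition outrate (k : 'I_d) := \sum_i W i k.
Definition total_rate := \sum_k outrate k.
Definition rate_mx : 'M[R]_d := \matrix_(k, j) (W k j - (k == j)%:R * outrate k).
Definition shifted_rate_mx : 'M[R]_d :=
  \matrix_(k, j) (W k j + (k == j)%:R * (total_rate - outrate k)).

Definition prob_vec (p : 'cV[R]_d) := (forall j, 0 <= p j 0) /\ \sum_j p j 0 = 1.

Lemma outrate_ge0 k : 0 <= outrate k.
Proof. exact: sumr_ge0. Qed.

Lemma outrate_le_total k : outrate k <= total_rate.
Proof.
rewrite /total_rate (bigD1 k) //= lerDl.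
by apply: sumr_ge0 => i _; exact: outrate_ge0.
Qed.

Lemma total_rate_ge0 : 0 <= total_rate.
Proof. by apply: sumr_ge0 => k _; exact: outrate_ge0. Qed.

Lemma shifted_rate_mx_ge0 k j : 0 <= shifted_rate_mx k j.
Proof.
rewrite mxE addr_ge0 // mulr_ge0 ?ler0n // subr_ge0; exact: outrate_le_total.
Qed.

Lemma shifted_rate_mx_colsum j : \sum_k shifted_rate_mx k j = total_rate.
Proof.
under eq_bigr do rewrite mxE.
by rewrite big_split /= sum_kronecker_mul -/(outrate j) addrC subrK.
Qed.

Lemma sum_rate_mx_mulmx (x : 'cV[R]_d) : \sum_k (rate_mx *m x) k 0 = 0.
Proof.
rewrite sum_mulmx_col big1 // => j _.
under eq_bigr do rewrite mxE.
by rewrite sumrB sum_kronecker_mul subrr mul0r.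
Qed.

Lemma rate_mx_shiftE : rate_mx = shifted_rate_mx + (- total_rate)%:M.
Proof.
apply/matrixP => k j; rewrite !mxE.
by case: (k == j); rewrite ?mulr1n ?mulr0n ?mul1r ?mul0r ?addr0 ?subr0 // addrA addrAC addrK.
Qed.

Lemma shifted_pow_mulmx (p : 'cV[R]_d) l : prob_vec p ->
  (forall j, 0 <= (shifted_rate_mx ^+ l *m p) j 0)
  /\ \sum_j (shifted_rate_mx ^+ l *m p) j 0 = total_rate ^+ l.
Proof.
case=> p0 p1; elim: l => [|l [IH0 IH1]]; first by rewrite expr0 mul1mx.
rewrite exprS -mulmxA; split.
  move=> j; rewrite mxE; apply: sumr_ge0 => k _.
  by rewrite mulr_ge0 ?shifted_rate_mx_ge0.
rewrite sum_mulmx_col.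
by under eq_bigr do rewrite shifted_rate_mx_colsum; rewrite -big_distrr /= IH1 exprS.
Qed.

Lemma shifted_pow_mulmx_le (p : 'cV[R]_d) l j : prob_vec p ->
  (shifted_rate_mx ^+ l *m p) j 0 <= total_rate ^+ l.
Proof.
move=> /(shifted_pow_mulmx l) [p0 <-].
by rewrite (bigD1 j) //= lerDl; apply: sumr_ge0.
Qed.

Lemma rate_mx_mulmxE (v : 'cV[R]_d) k :
  (rate_mx *m v) k 0 = \sum_j W k j * v j 0 - outrate k * v k 0.
Proof.
rewrite mxE; under eq_bigr do rewrite mxE mulrBl.
rewrite sumrB; congr (_ - _).
by under eq_bigr do rewrite eq_sym -mulrA; rewrite sum_kronecker_mul.
Qed.

Lemma exp_rate_coeffE (t : R) (p : 'cV[R]_d) k j :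
  t ^+ k / k`!%:R * (rate_mx ^+ k *m p) j 0 =
  \sum_(0 <= i < k.+1) exp_coeff (- total_rate * t) i *
     (t ^+ (k - i) / (k - i)`!%:R * (shifted_rate_mx ^+ (k - i) *m p) j 0).
Proof.
rewrite rate_mx_shiftE exprDn_comm; last exact: scalar_mxC.
rewrite mulmx_suml summxE big_distrr /= big_mkord; apply: eq_bigr => i _.
rewrite scalar_mxX -[shifted_rate_mx ^+ _ * _]/(_ *m _) mul_mx_scalar.
rewrite -[_ *+ 'C(k, i)]scaler_nat scalerA -scalemxAl mxE /exp_coeff /=.
have hi : (i <= k)%N by rewrite -ltnS.
rewrite -(bin_fact hi) -[in t ^+ k](subnKC hi) exprD !natrM exprMn.
have binD0 : 'C(k, i)%:R != 0 :> R by rewrite pnatr_eq0 -lt0n bin_gt0.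
have factD0 n : n`!%:R != 0 :> R by rewrite pnatr_eq0 -lt0n fact_gt0.
by field; rewrite binD0 !factD0.
Qed.

Lemma sum_exp_rate_partial (t : R) (p : 'cV[R]_d) n :
  \sum_j series (fun k => t ^+ k / k`!%:R * (rate_mx ^+ k *m p) j 0) n.+1
  = \sum_j p j 0.
Proof.
rewrite /series /= exchange_big big_nat_recl //= -big_distrr /= expr0 mul1mx.
rewrite fact0 divr1 mul1r [X in _ + X]big1 ?addr0 // => k _.
by rewrite -big_distrr /= [rate_mx ^+ _]exprS -mulmxA sum_rate_mx_mulmx mulr0.
Qed.

Lemma exp_rate_mx_prob_vec (t : R) (p : 'cV[R]_d) : 0 <= t -> prob_vec p ->
  exists2 c : 'cV[R]_d,
    forall j, series (fun k => t ^+ k / k`!%:R * (rate_mx ^+ k *m p) j 0) @ \oo --> c j 0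
    & prob_vec c.
Proof.
move=> t0 p_prob; have [_ p1] := p_prob.
have rt0 : 0 <= total_rate * t by rewrite mulr_ge0 ?total_rate_ge0.
pose g := exp_coeff (total_rate * t).
pose b j l := t ^+ l / l`!%:R * (shifted_rate_mx ^+ l *m p) j 0.
have b0 j l : 0 <= b j l.
  rewrite mulr_ge0 ?divr_ge0 ?exprn_ge0 //.
  by have [+ _] := shifted_pow_mulmx l p_prob; apply.
have b_le j l : b j l <= g l.
  have -> : g l = t ^+ l / l`!%:R * total_rate ^+ l by rewrite /g /exp_coeff /= exprMn; ring.
  by rewrite ler_wpM2l ?divr_ge0 ?exprn_ge0 ?shifted_pow_mulmx_le.
have cvg_b j : cvgn (series (b j)).
  apply: series_le_cvg (b0 j) _ (b_le j) (is_cvg_series_exp_coeff _) => l.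
  exact: exp_coeff_ge0.
pose c := \col_j (expR (- total_rate * t) * limn (series (b j))).
have cvg_c j :
    series (fun k => t ^+ k / k`!%:R * (rate_mx ^+ k *m p) j 0) @ \oo --> c j 0.
  rewrite mxE (_ : (fun k => _) = fun k =>
      \sum_(0 <= i < k.+1) exp_coeff (- total_rate * t) i * b j (k - i)%N).
    2: by apply/funext => k; exact: exp_rate_coeffE.
  apply: (@cvg_cauchy_product _ _ _ g) => [n|n|||].
  - by rewrite /exp_coeff /= normrM normfV normrX normr_nat mulNr normrN ger0_norm.
  - by rewrite ger0_norm.
  - exact: is_cvg_series_exp_coeff.
  - exact: is_cvg_series_exp_coeff. (* [expR] is defined as this limit *)
  - exact: cvg_b.
exists c => //; split=> [j|].
  rewrite mxE mulr_ge0 ?expR_ge0 //; apply: limr_ge => //.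
  by apply: nearW => n; apply: sumr_ge0 => l _.
pose total n := \sum_j series (fun k => t ^+ k / k`!%:R * (rate_mx ^+ k *m p) j 0) n.
have total_cvg : total @ \oo --> \sum_j c j 0.
  by apply: (@cvg_big R _ +%R 0 xpredT (@add_continuous R)).
have total_1 : total @ \oo --> (1 : R).
  apply: cvg_near_cst; exists 1%N => // -[|n] //= _.
  by rewrite /total sum_exp_rate_partial.
exact: cvg_unique total_cvg total_1.
Qed.
End RateMatrix.

Section Adjoint.
Variable R : realType.
Local Notation C := R[i].

Lemma adjmxM m n p (A : 'M[C]_(m, n)) (B : 'M[C]_(n, p)) :
  adjmx (A *m B) = adjmx B *m adjmx A.
Proof. by rewrite /adjmx trmx_mul map_mxM. Qed.

Lemma adjmxK m n (A : 'M[C]_(m, n)) : adjmx (adjmx A) = A.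
Proof. by apply/matrixP => i j; rewrite !mxE conjCK. Qed.

Lemma adjmxE m n (A : 'M[C]_(m, n)) i j : adjmx A i j = (A j i)^*.
Proof. by rewrite !mxE. Qed.

Lemma quad_form_col d (U X : 'M[C]_d) j :
  (adjmx (col j U) *m X *m col j U) 0 0 = (adjmx U *m X *m U) j j.
Proof.
rewrite !mxE; apply: eq_bigr => k _; rewrite !mxE; congr (_ * _).
by apply: eq_bigr => l _; rewrite !mxE.
Qed.

Definition lindblad_term d (L X : 'M[C]_d) : 'M[C]_d :=
  L *m X *m adjmx L - 2^-1 *: (adjmx L *m L *m X + X *m (adjmx L *m L)).

Lemma dissipatorE d m (h : 'I_m -> 'M[C]_d) X :
  dissipator h X = \sum_a lindblad_term (h a) X.
Proof. by []. Qed.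

Lemma lindblad_term_diag d (L : 'M[C]_d) (c : 'rV[C]_d) k :
  lindblad_term L (diag_mx c) k k =
  \sum_j `|L k j| ^+ 2 * c 0 j - (\sum_i `|L i k| ^+ 2) * c 0 k.
Proof.
rewrite /lindblad_term !mul_mx_diag mul_diag_mx !mxE.
under eq_bigr do rewrite !mxE.
under [X in _ - 2^-1 * (_ + _ * X)]eq_bigr do rewrite !mxE.
have -> : \sum_j L k j * c 0 j * (L k j)^* = \sum_j `|L k j| ^+ 2 * c 0 j.
  by apply: eq_bigr => j _; rewrite normCK mulrAC.
have -> : \sum_j adjmx L k j * L j k = \sum_i `|L i k| ^+ 2.
  by apply: eq_bigr => i _; rewrite !mxE normCK [RHS]mulrC.
have -> : \sum_j (L j k)^* * L j k = \sum_i `|L i k| ^+ 2.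
  by apply: eq_bigr => i _; rewrite normCK [RHS]mulrC.
have two_neq0 : (2 : C) != 0 by rewrite pnatr_eq0.
by field.
Qed.
End Adjoint.

Section UnitaryBasis.
Variables (R : realType) (d : nat) (U : 'M[R[i]]_d).
Local Notation C := R[i].
Hypothesis U_unitary : is_unitary_mx U.

Lemma unitary_mxC : U *m adjmx U = 1%:M.
Proof. exact: mulmx1C. Qed.

Definition udiag (c : 'rV[C]_d) : 'M[C]_d := U *m diag_mx c *m adjmx U.

Lemma udiagE c a b : udiag c a b = \sum_l U a l * c 0 l * (U b l)^*.
Proof. by rewrite /udiag mul_mx_diag !mxE; apply: eq_bigr => l _; rewrite !mxE. Qed.

Lemma adj_udiag_mx c : adjmx U *m udiag c *m U = diag_mx c.
Proof. by rewrite /udiag !mulmxA U_unitary mul1mx -mulmxA U_unitary mulmx1. Qed.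

Lemma udiag_mulC c c' : udiag c *m udiag c' = udiag c' *m udiag c.
Proof.
rewrite /udiag -!mulmxA !(mulmxA (adjmx U)) U_unitary !mul1mx.
by rewrite !mulmxA -!(mulmxA U) diag_mxC.
Qed.

Lemma G0E X : G0 U X = udiag (\row_j (adjmx U *m X *m U) j j).
Proof.
apply/matrixP => a b; rewrite udiagE /G0 summxE; apply: eq_bigr => j _.
rewrite mxE quad_form_col /projU [(col j U *m _) a b]mxE big_ord1 !mxE; ring.
Qed.

Lemma G0_udiag c : G0 U (udiag c) = udiag c.
Proof.
by rewrite G0E adj_udiag_mx; congr udiag; apply/rowP => j; rewrite !mxE eqxx mulr1n.
Qed.

Lemma adj_conj_mulmx (A B : 'M[C]_d) :
  adjmx U *m (A *m B) *m U = (adjmx U *m A *m U) *m (adjmx U *m B *m U).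
Proof. by rewrite !mulmxA -[_ *m A *m U *m adjmx U]mulmxA unitary_mxC mulmx1. Qed.

Lemma adj_conj_adjmx (A : 'M[C]_d) :
  adjmx U *m adjmx A *m U = adjmx (adjmx U *m A *m U).
Proof. by rewrite !adjmxM adjmxK mulmxA. Qed.

Lemma adj_conj_lindblad_term (L X : 'M[C]_d) :
  adjmx U *m lindblad_term L X *m U =
  lindblad_term (adjmx U *m L *m U) (adjmx U *m X *m U).
Proof.
rewrite /lindblad_term mulmxBr mulmxBl -scalemxAr -scalemxAl mulmxDr mulmxDl.
by rewrite !adj_conj_mulmx adj_conj_adjmx.
Qed.

Lemma unitary_entry_le1 i l : `|U i l| <= 1.
Proof.
have := congr1 (fun M : 'M[C]_d => M l l) U_unitary; rewrite /= !mxE eqxx mulr1n => Ull.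
rewrite -(@expr_le1 _ 2) // normCK -Ull (bigD1 i) //= adjmxE [_ * U i l]mulrC lerDl.
by apply: sumr_ge0 => k _; rewrite adjmxE mulrC mul_conjC_ge0.
Qed.

Lemma mxtrace_udiag c : \tr (udiag c) = \sum_j c 0 j.
Proof.
by rewrite /udiag mxtrace_mulC mulmxA U_unitary mul1mx mxtrace_diag.
Qed.

End UnitaryBasis.

Section DiagonalStates.
Variables (R : realType) (d : nat) (U : 'M[R[i]]_d).
Hypothesis U_unitary : is_unitary_mx U.
Local Open Scope complex_scope.
Local Notation udiag := (udiag U).

Definition realrow (v : 'cV[R]_d) : 'rV[R[i]]_d := \row_j (v j 0)%:C.

Lemma udiag_hermitian (v : 'cV[R]_d) : is_hermitian (udiag (realrow v)).
Proof.
rewrite /is_hermitian /udiag !adjmxM adjmxK mulmxA; congr (_ *m _ *m _).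
apply/matrixP => i j; rewrite !mxE.
have [->|_] := eqVneq i j; last by rewrite !mulr0n conjC0.
by rewrite !mulr1n; apply: conj_Creal; rewrite complex_real.
Qed.

Lemma udiag_psd (v : 'cV[R]_d) : (forall j, 0 <= v j 0) -> is_psd_mx (udiag (realrow v)).
Proof.
move=> v0 w; rewrite /udiag.
have -> : adjmx w *m (U *m diag_mx (realrow v) *m adjmx U) *m w =
          adjmx (adjmx U *m w) *m diag_mx (realrow v) *m (adjmx U *m w).
  by rewrite adjmxM adjmxK !mulmxA.
rewrite mul_mx_diag !mxE; apply: sumr_ge0 => l _; rewrite !mxE.
by rewrite mulrAC mulrC mulr_ge0 ?ler0c // mulrC mul_conjC_ge0.
Qed.

Lemma udiag_density p : prob_vec p -> density (udiag (realrow p)).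
Proof.
case=> p0 p1; split; first exact: udiag_hermitian.
split; first exact: udiag_psd.
rewrite mxtrace_udiag //; under eq_bigr do rewrite mxE.
by rewrite -rmorph_sum p1 rmorph1.
Qed.

Lemma mx_cvg_to_udiag (S : nat -> 'cV[R]_d) (c : 'cV[R]_d) :
  (forall j, (fun n => S n j 0) @ \oo --> c j 0) ->
  mx_cvg_to (fun n => udiag (realrow (S n))) (udiag (realrow c)).
Proof.
move=> cvg_S e e0.
pose e' := e / d.+1%:R.
have e'0 : 0 < e' by rewrite divr_gt0 // ltr0n.
have /choice [N HN] l : exists N, forall n, (N <= n)%N -> `|c l 0 - S n l 0| < e'.
  by have /cvgrPdist_lt/(_ e' e'0) [N _ HN] := cvg_S l; exists N => n /HN.
exists (\max_l N l) => n hn a b.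
rewrite !udiagE -sumrB.
apply: le_lt_trans (ler_norm_sum _ _ _) _.
apply: (@le_lt_trans _ _ (\sum_(l < d) e'%:C)).
  apply: ler_sum => l _.
  rewrite !mxE -mulrBl -mulrBr -rmorphB !normrM norm_conjC.
  rewrite -[e'%:C]mul1r -[1 * _]mulr1; apply: ler_pM; rewrite ?mulr_ge0 //.
  - apply: ler_pM; rewrite ?unitary_entry_le1 //.
    rewrite normc_def /= expr0n /= addr0 sqrtr_sqr lecR distrC ltW //.
    by apply: HN; apply: leq_trans hn; exact: leq_bigmax.
  - exact: unitary_entry_le1.
rewrite sumr_const card_ord -rmorphMn ltcR /e' -mulr_natr mulrAC.
by rewrite ltr_pdivrMr ?ltr0n // ltr_pM2l // ltr_nat.
Qed.

Lemma density_G0_fixed rho : density rho -> G0 U rho = rho ->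
  exists2 p, prob_vec p & rho = udiag (realrow p).
Proof.
case=> _ [rho_psd rho_tr] rho_fixed.
pose p : 'cV[R]_d := \col_j complex.Re ((adjmx U *m rho *m U) j j).
have diag_ge0 j : 0 <= (adjmx U *m rho *m U) j j by rewrite -quad_form_col.
have diagE j : (adjmx U *m rho *m U) j j = (p j 0)%:C.
  have := diag_ge0 j; rewrite [p j 0]mxE.
  by case: (_ j j) => a b; rewrite lecE /= => /andP[/eqP -> _].
have rhoE : rho = udiag (realrow p).
  rewrite -{1}rho_fixed G0E //; congr udiag; apply/rowP => j.
  by rewrite mxE diagE [RHS]mxE.
exists p => //; split=> [j|].
  by have := diag_ge0 j; rewrite lecE [p j 0]mxE => /andP[_].
apply: complexI; rewrite rmorph1 -rho_tr rhoE mxtrace_udiag // rmorph_sum.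
by apply: eq_bigr => j _; rewrite [RHS]mxE.
Qed.

End DiagonalStates.

Section DiagonalDynamics.
Variables (R : realType) (d : nat) (U : 'M[R[i]]_d).
Variables (m : nat) (h : 'I_m -> 'M[R[i]]_d).
Hypothesis U_unitary : is_unitary_mx U.
Local Open Scope complex_scope.
Local Notation udiag := (udiag U).

Definition jump_rate_mx : 'M[R]_d :=
  \matrix_(k, j) \sum_a (complex.Re ((adjmx U *m h a *m U) k j) ^+ 2
                        + complex.Im ((adjmx U *m h a *m U) k j) ^+ 2).

Lemma jump_rate_mx_ge0 k j : 0 <= jump_rate_mx k j.
Proof. by rewrite mxE; apply: sumr_ge0 => a _; rewrite addr_ge0 ?sqr_ge0. Qed.

Lemma jump_rate_mxE k j :
  (jump_rate_mx k j)%:C = \sum_a `|(adjmx U *m h a *m U) k j| ^+ 2.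
Proof. by rewrite mxE rmorph_sum; apply: eq_bigr => a _; exact: add_Re2_Im2. Qed.

Lemma Dhat_udiag v :
  Dhat U h (udiag (realrow v)) = udiag (realrow (rate_mx jump_rate_mx *m v)).
Proof.
rewrite /Dhat G0_udiag // G0E // dissipatorE mulmx_sumr mulmx_suml.
under eq_bigr do rewrite adj_conj_lindblad_term // adj_udiag_mx //.
congr udiag; apply/rowP => k; rewrite [LHS]mxE [RHS]mxE summxE rate_mx_mulmxE.
under eq_bigr do rewrite lindblad_term_diag.
rewrite sumrB rmorphB /= rmorphM /= rmorph_sum; congr (_ - _).
  rewrite exchange_big /=; apply: eq_bigr => j _.
  by rewrite -big_distrl /= -jump_rate_mxE rmorphM !mxE.
rewrite -big_distrl /= /outrate rmorph_sum exchange_big !mxE /=.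
by congr (_ * _); apply: eq_bigr => i _; rewrite jump_rate_mxE.
Qed.

Lemma iter_Dhat_udiag v n :
  iter n (Dhat U h) (udiag (realrow v)) = udiag (realrow (rate_mx jump_rate_mx ^+ n *m v)).
Proof.
elim: n => [|n IH]; first by rewrite expr0 mul1mx.
by rewrite iterS IH Dhat_udiag exprS mulmxA.
Qed.

Lemma exp_partial_udiag (t : R) v :
  exp_partial (Dhat U h) t (udiag (realrow v)) =
  fun n => udiag (realrow (\col_j series (fun k =>
    t ^+ k / k`!%:R * (rate_mx jump_rate_mx ^+ k *m v) j 0) n)).
Proof.
apply/funext => n; rewrite /exp_partial; under eq_bigr do rewrite iter_Dhat_udiag.
apply/matrixP => a b; rewrite summxE udiagE.
under eq_bigr do rewrite mxE udiagE big_distrr.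
rewrite exchange_big /=; apply: eq_bigr => l _.
rewrite !mxE /series /= big_mkord rmorph_sum big_distrr big_distrl /=.
by apply: eq_bigr => k _; rewrite !mxE rmorphM /=; ring.
Qed.

End DiagonalDynamics.

Section Eigenbasis.
Variables (R : realType) (d : nat) (U H : 'M[R[i]]_d) (lam : 'I_d -> R[i]).
Hypothesis U_unitary : is_unitary_mx U.
Hypothesis U_eigen : forall j, H *m col j U = lam j *: col j U.

Lemma H_udiag : H = udiag U (\row_j lam j).
Proof.
have HU : H *m U = U *m diag_mx (\row_j lam j).
  apply/matrixP => a j; have := congr1 (fun v : 'cV_d => v a 0) (U_eigen j).
  rewrite mul_mx_diag !mxE mulrC => <-; apply: eq_bigr => k _; by rewrite !mxE.
by rewrite /udiag -HU -mulmxA unitary_mxC // mulmx1.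
Qed.

Lemma commute_udiag c : H *m udiag U c = udiag U c *m H.
Proof. by rewrite H_udiag udiag_mulC. Qed.

Hypothesis lam_inj : injective lam.

Lemma G0_commute rho : H *m rho = rho *m H -> G0 U rho = rho.
Proof.
move=> rho_comm; set X := adjmx U *m rho *m U.
have XC : X *m diag_mx (\row_j lam j) = diag_mx (\row_j lam j) *m X.
  by rewrite -(adj_udiag_mx U_unitary) -!adj_conj_mulmx // -H_udiag rho_comm.
have X_diag : X = diag_mx (\row_j X j j).
  apply/matrixP => k j; rewrite [RHS]mxE !mxE.
  case: eqP => [-> //|neq_kj]; rewrite mulr0n.
  move/matrixP/(_ k j)/eqP: XC; rewrite mul_mx_diag mul_diag_mx !mxE mulrC.
  by rewrite -subr_eq0 -mulrBl mulf_eq0 subr_eq0 => /orP[/eqP/lam_inj/esym/neq_kj|/eqP].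
rewrite G0E // -/X /udiag -X_diag /X !mulmxA unitary_mxC // mul1mx.
by rewrite -mulmxA unitary_mxC // mulmx1.
Qed.

End Eigenbasis.

Theorem lemma4 (R : realType) (d m : nat) (H U : 'M[R[i]]_d)
  (lam : 'I_d -> R[i]) (h : 'I_m -> 'M[R[i]]_d) :
  is_hermitian H ->
  is_unitary_mx U ->
  (forall j : 'I_d, H *m col j U = lam j *: col j U) ->
  injective lam ->
  forall (rho : 'M[R[i]]_d), density rho -> H *m rho = rho *m H ->
  forall t : R, 0 <= t ->
  exists M : 'M[R[i]]_d,
    is_exp_apply (Dhat U h) t rho M /\ density M /\ H *m M = M *m H.
Proof.
move=> _ U_unitary U_eigen lam_inj rho rho_density rho_comm t t0.
have [p p_prob ->] :=
  density_G0_fixed U_unitary rho_density (G0_commute U_unitary U_eigen lam_inj rho_comm).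
have [c cvg_c c_prob] := exp_rate_mx_prob_vec (jump_rate_mx_ge0 U h) t0 p_prob.
exists (udiag U (realrow c)); split; last split.
- rewrite /is_exp_apply exp_partial_udiag //.
  by apply: mx_cvg_to_udiag => // j; under eq_fun do rewrite mxE; exact: cvg_c.
- exact: udiag_density.
- exact: commute_udiag.
Qed.
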